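(* Let $H(x)=\cos x$ for $|x|\le\pi/2$ and $H(x)=0$ for $|x|\ge\pi/2$. Let $(\lambda_n)_{n\in\mathbb{Z}}$ be a strictly increasing sequence of real numbers satisfying $\lambda_{n+2}-\lambda_n\ge\pi$ for all $n\in\mathbb{Z}$. Then for every finitely supported sequence $(a_n)_{n\in\mathbb{Z}}$ of real numbers, the function $G(x)=\sum_n a_n H^2(x+\lambda_n)$ satisfies \[ \int_{-\infty}^{\infty}|G'(x)|^2\,dx\le 4\int_{-\infty}^{\infty}|G(x)|^2\,dx . \]
   Context: $H^2(x)=(H(x))^2$. *)

From Stdlib Require Import Reals Lra Lia ZArith.
Open Scope R_scope.

Definition H (x : R) : R :=
  if Rle_dec (Rabs x) (PI / 2) then cos x else 0.

Definition H2 (x : R) : R := (H x) ^ 2.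

Definition improper_integral (f : R -> R) (I : R) : Prop :=
  (forall a b : R, inhabited (Riemann_integrable f a b)) /\
  (forall eps : R, 0 < eps -> exists M : R,
     forall (a b : R) (pr : Riemann_integrable f a b),
       a <= - M -> M <= b -> Rabs (RiemannInt pr - I) < eps).

(* G(x) = sum_n a_n H^2(x + lambda_n), for a supported in [-N, N]. *)
Definition Gfun (lam a : Z -> R) (N : nat) (x : R) : R :=
  sum_f_R0 (fun k => a (Z.of_nat k - Z.of_nat N)%Z
                     * H2 (x + lam (Z.of_nat k - Z.of_nat N)%Z)) (2 * N).

(* Write G = sum_k b_k H^2(. + l_k).  Translates two or more indices apart have
   disjoint supports, so 4 G^2 - G'^2 = sum_k b_k^2 rho(l_k, l_k)
   + 2 sum_k b_k b_(k+1) rho(l_k, l_(k+1)) with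
   rho(u, v) = 4 H^2(. + u) H^2(. + v) - (H^2)'(. + u) (H^2)'(. + v).
   On the common support, rho(u, v)(x) = 4 cos a cos b cos (a + b) with a = x + u,
   b = x + v, which has an explicit primitive; thus the integral of rho(u, v) is
   V(|u - v|), where V(d) = PI - d + sin (2 d) / 2 for d <= PI and 0 beyond.
   Hence the integral of 4 G^2 - G'^2 is PI sum b_k^2 + 2 sum b_k b_(k+1) W_k with
   W_k = V(l_(k+1) - l_k) in [0, PI], and l_(k+2) - l_k >= PI forces
   W_k + W_(k+1) <= PI, which makes this quadratic form nonnegative. *)

From Stdlib Require Import Reals ZArith Lra Lia FunctionalExtensionality.
From Coquelicot Require Import Coquelicot.
Open Scope R_scope.

Fixpoint sum_lt (f : nat -> R) (n : nat) : R :=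
  match n with O => 0 | S k => sum_lt f k + f k end.

Lemma sum_f_R0_sum_lt f n : sum_f_R0 f n = sum_lt f (S n).
Proof. induction n as [|n IH]; simpl in *; [ring | rewrite IH; reflexivity]. Qed.

Lemma sum_lt_ext f g n : (forall k, (k < n)%nat -> f k = g k) -> sum_lt f n = sum_lt g n.
Proof. induction n as [|n IH]; intros E; simpl; [reflexivity | rewrite IH, E; auto]. Qed.

Lemma sum_lt_0 f n : (forall k, (k < n)%nat -> f k = 0) -> sum_lt f n = 0.
Proof. induction n as [|n IH]; intros E; simpl; [reflexivity | rewrite IH, E; auto; ring]. Qed.

Lemma sum_lt_scal c f n : c * sum_lt f n = sum_lt (fun k => c * f k) n.
Proof. induction n as [|n IH]; simpl; rewrite <- ?IH; ring. Qed.

Lemma sum_lt_sub f g n : sum_lt f n - sum_lt g n = sum_lt (fun k => f k - g k) n.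
Proof. induction n as [|n IH]; simpl; rewrite <- ?IH; ring. Qed.

Lemma sum_lt_sqr_band u m : (forall i j, (i + 2 <= j)%nat -> u i * u j = 0) ->
  sum_lt u (S m) ^ 2
  = sum_lt (fun k => u k ^ 2) (S m) + 2 * sum_lt (fun k => u k * u (S k)) m.
Proof.
  intros Hu. induction m as [|m IH]; [simpl; ring|].
  assert (Hlast : u (S m) * sum_lt u m = 0).
  { rewrite sum_lt_scal. apply sum_lt_0. intros k Hk. rewrite Rmult_comm. apply Hu. lia. }
  transitivity (sum_lt u (S m) ^ 2 + 2 * (u (S m) * sum_lt u m) + 2 * (u m * u (S m))
                + u (S m) ^ 2); [simpl; ring|].
  rewrite IH, Hlast. simpl; ring.
Qed.

Lemma sum_lt_deriv (F : nat -> R -> R) (d : nat -> R) x n :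
  (forall k, derivable_pt_lim (F k) x (d k)) ->
  derivable_pt_lim (fun y => sum_lt (fun k => F k y) n) x (sum_lt d n).
Proof.
  intros HF. induction n as [|n IH]; simpl.
  - apply derivable_pt_lim_const.
  - exact (derivable_pt_lim_plus _ _ _ _ _ IH (HF n)).
Qed.

Lemma sum_lt_continuity (F : nat -> R -> R) x n :
  (forall k, continuity_pt (F k) x) -> continuity_pt (fun y => sum_lt (fun k => F k y) n) x.
Proof.
  intros HF. induction n as [|n IH]; simpl.
  - apply continuity_pt_const. intros ? ?. reflexivity.
  - exact (continuity_pt_plus _ _ _ IH (HF n)).
Qed.

Lemma derivable_pt_lim_shift f c x l :
  derivable_pt_lim f (x + c) l -> derivable_pt_lim (fun y => f (y + c)) x l.
Proof.
  intros Hf. replace l with (l * 1) by ring.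
  apply (derivable_pt_lim_comp (fun y => y + c) f); [|exact Hf].
  apply is_derive_Reals. auto_derive; [exact I | ring].
Qed.

Lemma continuity_pt_shift f c x :
  continuity_pt f (x + c) -> continuity_pt (fun y => f (y + c)) x.
Proof.
  intros Hf. apply (continuity_pt_comp (fun y => y + c) f); [|exact Hf].
  apply derivable_continuous_pt. eexists. apply is_derive_Reals. auto_derive; [exact I | reflexivity].
Qed.

Lemma continuity_pt_abs_sqr f x :
  continuity_pt f x -> continuity_pt (fun y => Rabs (f y) ^ 2) x.
Proof.
  intros Hf. replace (fun y => Rabs (f y) ^ 2) with (fun y => f y * f y).
  - exact (continuity_pt_mult f f x Hf Hf).
  - apply functional_extensionality. intro y. rewrite pow2_abs. ring.
Qed.

Lemma Riemann_integrable_continuous f a b :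
  (forall x, continuity_pt f x) -> Riemann_integrable f a b.
Proof.
  intros Hf. destruct (Rle_dec a b) as [Hab|Hab].
  - apply continuity_implies_RiemannInt; auto.
  - apply RiemannInt_P1, continuity_implies_RiemannInt; auto. lra.
Qed.

Lemma RiemannInt_vanishing f a b (pr : Riemann_integrable f a b) :
  a <= b -> (forall x, a < x < b -> f x = 0) -> RiemannInt pr = 0.
Proof.
  intros Hab Hf. rewrite (RiemannInt_P18 pr (RiemannInt_P14 a b 0) Hab Hf).
  rewrite RiemannInt_P15. ring.
Qed.

Lemma improper_integral_compact f M (pr : Riemann_integrable f (- M) M) :
  (forall x, continuity_pt f x) -> (forall x, M <= Rabs x -> f x = 0) ->
  improper_integral f (RiemannInt pr).
Proof.
  intros Hc Hf. split.
  - intros a b. constructor. apply Riemann_integrable_continuous, Hc.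
  - intros eps Heps. exists M. intros a b pr' Ha Hb.
    set (pra := Riemann_integrable_continuous f a (- M) Hc).
    set (prb := Riemann_integrable_continuous f M b Hc).
    set (prab := Riemann_integrable_continuous f (- M) b Hc).
    assert (Ea : RiemannInt pra = 0).
    { apply RiemannInt_vanishing; [lra|]. intros x Hx. apply Hf.
      assert (Hx' := Rle_abs (- x)). rewrite Rabs_Ropp in Hx'. lra. }
    assert (Eb : RiemannInt prb = 0).
    { apply RiemannInt_vanishing; [lra|]. intros x Hx. apply Hf.
      assert (Hx' := Rle_abs x). lra. }
    rewrite <- (RiemannInt_P26 pra prab pr'), <- (RiemannInt_P26 pr prb prab), Ea, Eb.
    replace (0 + (RiemannInt pr + 0) - RiemannInt pr) with 0 by ring.
    rewrite Rabs_R0. exact Heps.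
Qed.

Lemma RiemannInt_primitive_gap (f g F : R -> R) (c a b : R)
  (prf : Riemann_integrable f a b) (prg : Riemann_integrable g a b) :
  (forall x, continuity_pt f x) -> (forall x, continuity_pt g x) ->
  (forall x, derivable_pt_lim F x (c * g x - f x)) ->
  RiemannInt prf + (F b - F a) = c * RiemannInt prg.
Proof.
  intros Hf Hg HF.
  assert (Cf : forall x, continuous f x) by (intro x; apply continuity_pt_filterlim, Hf).
  assert (Cg : forall x, continuous g x) by (intro x; apply continuity_pt_filterlim, Hg).
  rewrite <- (RInt_Reals f a b prf), <- (RInt_Reals g a b prg).
  assert (HI : is_RInt (fun x => c * g x - f x) a b (F b - F a)).
  { apply (is_RInt_derive F).
    - intros x _. apply is_derive_Reals, HF.
    - intros x _. apply continuity_pt_filterlim.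
      exact (continuity_pt_minus (mult_real_fct c g) f x (continuity_pt_scal g c x (Hg x)) (Hf x)). }
  assert (HI' : is_RInt (fun x => c * g x - f x) a b (c * RInt g a b - RInt f a b)).
  { apply (is_RInt_minus (fun x => c * g x) f); [apply (is_RInt_scal g) |];
      apply (RInt_correct (V := R_CompleteNormedModule)), ex_RInt_continuous; auto. }
  rewrite <- (is_RInt_unique _ _ _ _ HI), (is_RInt_unique _ _ _ _ HI'). ring.
Qed.

Definition clamp (lo hi y : R) : R := Rmax lo (Rmin hi y).

Lemma clamp_below lo hi y : lo <= hi -> y <= lo -> clamp lo hi y = lo.
Proof. intros. unfold clamp, Rmax, Rmin. repeat destruct Rle_dec; lra. Qed.

Lemma clamp_id lo hi y : lo <= y <= hi -> clamp lo hi y = y.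
Proof. intros. unfold clamp, Rmax, Rmin. repeat destruct Rle_dec; lra. Qed.

Lemma clamp_above lo hi y : lo <= hi -> hi <= y -> clamp lo hi y = hi.
Proof. intros. unfold clamp, Rmax, Rmin. repeat destruct Rle_dec; lra. Qed.

Lemma clamp_lipschitz lo hi y z : Rabs (clamp lo hi y - clamp lo hi z) <= Rabs (y - z).
Proof. unfold clamp, Rmax, Rmin, Rabs. repeat destruct Rle_dec; repeat destruct Rcase_abs; lra. Qed.

Lemma continuity_pt_clamp lo hi x : continuity_pt (clamp lo hi) x.
Proof.
  intros eps Heps. exists eps. split; [exact Heps|].
  intros y [_ Hy]. simpl in *. unfold R_dist in *.
  eapply Rle_lt_trans; [apply clamp_lipschitz | exact Hy].
Qed.

Lemma derivable_pt_lim_comp_lipschitz_0 (P g : R -> R) x :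
  (forall y, Rabs (g y - g x) <= Rabs (y - x)) ->
  derivable_pt_lim P (g x) 0 -> derivable_pt_lim (fun y => P (g y)) x 0.
Proof.
  intros Hg HP eps Heps. destruct (HP eps Heps) as [d Hd]. exists d.
  intros h Hh0 Hhd. rewrite Rminus_0_r.
  set (k := g (x + h) - g x).
  assert (Hkh : Rabs k <= Rabs h) by (unfold k; replace h with (x + h - x) at 2 by ring; apply Hg).
  destruct (Req_dec k 0) as [Hk0|Hk0].
  - replace (g (x + h)) with (g x) by (unfold k in Hk0; lra).
    unfold Rminus. rewrite Rplus_opp_r, Rdiv_0_l, Rabs_R0. exact Heps.
  - specialize (Hd k Hk0 (Rle_lt_trans _ _ _ Hkh Hhd)).
    replace (g x + k) with (g (x + h)) in Hd by (unfold k; ring). rewrite Rminus_0_r in Hd.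
    set (D := P (g (x + h)) - P (g x)) in *.
    replace (D / h) with (D / k * (k / h)) by (field; auto).
    assert (Hq : Rabs (k / h) <= 1).
    { unfold Rdiv. rewrite Rabs_mult, Rabs_inv.
      apply (Rmult_le_reg_r (Rabs h)); [apply Rabs_pos_lt; auto|].
      rewrite Rmult_assoc, Rinv_l, Rmult_1_r, Rmult_1_l by (apply Rabs_no_R0; auto). exact Hkh. }
    rewrite Rabs_mult. assert (0 <= Rabs (D / k)) by apply Rabs_pos.
    assert (0 <= Rabs (k / h)) by apply Rabs_pos. nra.
Qed.

(* Inside [(lo, hi)] the clamp is locally the identity; elsewhere [p] vanishes at
   the clamped point and the 1-Lipschitz clamp preserves that zero derivative. *)
Lemma derivable_pt_lim_comp_clamp (P p : R -> R) lo hi x :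
  lo <= hi -> (forall y, derivable_pt_lim P y (p y)) -> p lo = 0 -> p hi = 0 ->
  derivable_pt_lim (fun y => P (clamp lo hi y)) x (p (clamp lo hi x)).
Proof.
  intros Hlh HP Hlo Hhi.
  assert (Hflat : forall c, p c = 0 -> clamp lo hi x = c ->
            derivable_pt_lim (fun y => P (clamp lo hi y)) x (p (clamp lo hi x))).
  { intros c Hc Ex. rewrite Ex, Hc. apply derivable_pt_lim_comp_lipschitz_0.
    - intro y. apply clamp_lipschitz.
    - rewrite Ex, <- Hc. apply HP. }
  destruct (Rle_or_lt x lo) as [Hx|Hx]; [exact (Hflat lo Hlo (clamp_below _ _ _ Hlh Hx))|].
  destruct (Rle_or_lt hi x) as [Hx'|Hx']; [exact (Hflat hi Hhi (clamp_above _ _ _ Hlh Hx'))|].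
  rewrite clamp_id by lra.
  apply (derivable_pt_lim_locally_ext P _ x lo hi); [lra| |apply HP].
  intros z Hz. rewrite clamp_id; lra.
Qed.

Notation clamp_pi2 := (clamp (-(PI/2)) (PI/2)).

Definition H2' (y : R) : R := - sin (2 * clamp_pi2 y).

Lemma PI2_pos : 0 < PI / 2.
Proof. assert (H := PI_RGT_0). lra. Qed.

Lemma clamp_pi2_boundary y : PI / 2 <= Rabs y ->
  clamp_pi2 y = - (PI / 2) \/ clamp_pi2 y = PI / 2.
Proof.
  intros Hy. assert (Hp := PI2_pos). unfold Rabs in Hy. destruct Rcase_abs in Hy.
  - left. apply clamp_below; lra.
  - right. apply clamp_above; lra.
Qed.

Lemma H_clamp y : H y = cos (clamp_pi2 y).
Proof.
  unfold H. destruct Rle_dec as [Hy|Hy].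
  - rewrite clamp_id; [reflexivity | apply Rabs_le_between; exact Hy].
  - destruct (clamp_pi2_boundary y) as [E|E]; [lra|..]; rewrite E;
      [rewrite cos_neg|]; rewrite cos_PI2; reflexivity.
Qed.

Lemma H2_inside y : Rabs y <= PI / 2 -> H2 y = cos y ^ 2 /\ H2' y = - sin (2 * y).
Proof.
  intros Hy. apply Rabs_le_between in Hy.
  unfold H2, H2'. rewrite H_clamp, clamp_id by exact Hy. split; reflexivity.
Qed.

Lemma H2_outside y : PI / 2 <= Rabs y -> H2 y = 0 /\ H2' y = 0.
Proof.
  intros Hy. unfold H2, H2'. rewrite H_clamp.
  destruct (clamp_pi2_boundary y Hy) as [E|E]; rewrite E.
  - rewrite cos_neg, cos_PI2. replace (2 * - (PI / 2)) with (- PI) by field.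
    rewrite sin_neg, sin_PI. split; ring.
  - rewrite cos_PI2. replace (2 * (PI / 2)) with PI by field. rewrite sin_PI. split; ring.
Qed.

Lemma H2_deriv x : derivable_pt_lim H2 x (H2' x).
Proof.
  assert (E : H2 = fun y => (fun z => cos z ^ 2) (clamp_pi2 y)).
  { apply functional_extensionality. intro y. unfold H2. rewrite H_clamp. reflexivity. }
  rewrite E. unfold H2'.
  apply (derivable_pt_lim_comp_clamp (fun z => cos z ^ 2) (fun z => - sin (2 * z))).
  - assert (Hp := PI2_pos). lra.
  - intro y. apply is_derive_Reals. auto_derive; [exact I|]. rewrite sin_2a. ring.
  - replace (2 * - (PI / 2)) with (- PI) by field. rewrite sin_neg, sin_PI. ring.
  - replace (2 * (PI / 2)) with PI by field. rewrite sin_PI. ring.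
Qed.

Lemma H2'_continuity x : continuity_pt H2' x.
Proof.
  apply (continuity_pt_comp clamp_pi2 (fun z => - sin (2 * z))).
  - apply continuity_pt_clamp.
  - apply derivable_continuous_pt. eexists. apply is_derive_Reals.
    auto_derive; [exact I | reflexivity].
Qed.

Lemma H2_disjoint u v : PI <= Rabs (u - v) -> H2 u * H2 v = 0 /\ H2' u * H2' v = 0.
Proof.
  intros Huv. assert (Htri : Rabs (u - v) <= Rabs u + Rabs v).
  { unfold Rminus. rewrite <- (Rabs_Ropp v). apply Rabs_triang. }
  destruct (Rle_or_lt (PI / 2) (Rabs u)) as [Hu|Hu].
  - destruct (H2_outside u Hu) as [-> ->]. split; ring.
  - assert (Hv : PI / 2 <= Rabs v) by lra.
    destruct (H2_outside v Hv) as [-> ->]. split; ring.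
Qed.

Definition pair_density (u v x : R) : R :=
  4 * H2 (x + u) * H2 (x + v) - H2' (x + u) * H2' (x + v).

(* [pair_core u v] is a primitive of [pair_kernel u v], which agrees with
   [pair_density u v] on the window where both translates are supported; outside
   the window the density vanishes, so clamping to the window gives a global
   primitive (the window is empty unless [|u - v| <= PI]). *)
Definition pair_kernel (u v y : R) : R :=
  4 * cos (y + u) * cos (y + v) * cos ((y + u) + (y + v)).

Definition pair_core (u v y : R) : R :=
  y + (sin (2 * (y + u)) + sin (2 * (y + v))) / 2 + sin (2 * (y + u) + 2 * (y + v)) / 4.

Definition pair_window (u v : R) : R -> R :=
  clamp (Rmax (- u) (- v) - PI / 2) (Rmin (- u) (- v) + PI / 2).

Definition pair_primitive (u v x : R) : R :=
  if Rle_dec (Rabs (u - v)) PI then pair_core u v (pair_window u v x) else 0.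

Lemma pair_density_sym u v x : pair_density u v x = pair_density v u x.
Proof. unfold pair_density. ring. Qed.

Lemma pair_primitive_sym u v : pair_primitive u v = pair_primitive v u.
Proof.
  apply functional_extensionality. intro x.
  unfold pair_primitive, pair_window, pair_core.
  rewrite Rabs_minus_sym, Rmax_comm, Rmin_comm, (Rplus_comm (sin (2 * (_ + u)))),
    (Rplus_comm (2 * (_ + u))).
  reflexivity.
Qed.

Lemma pair_core_deriv u v y : derivable_pt_lim (pair_core u v) y (pair_kernel u v y).
Proof.
  apply is_derive_Reals. unfold pair_core, pair_kernel. auto_derive; [exact I|].
  rewrite (cos_plus (2 * _)), (cos_plus (y + u)), !cos_2a_cos, !sin_2a. field.
Qed.

Lemma pair_window_le u v : v <= u -> pair_window u v = clamp (- v - PI / 2) (- u + PI / 2).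
Proof. intros Hvu. unfold pair_window. rewrite Rmax_right, Rmin_left by lra. reflexivity. Qed.

Lemma pair_density_kernel u v x : v <= u <= v + PI ->
  pair_density u v x = pair_kernel u v (clamp (- v - PI / 2) (- u + PI / 2) x).
Proof.
  intros Huv. assert (Hp := PI2_pos). unfold pair_density, pair_kernel.
  destruct (Rle_or_lt x (- v - PI / 2)) as [Hx|Hx].
  - rewrite clamp_below by lra. replace (- v - PI / 2 + v) with (- (PI / 2)) by ring.
    rewrite cos_neg, cos_PI2.
    destruct (H2_outside (x + v)) as [-> ->]; [rewrite Rabs_left1; lra | ring].
  - destruct (Rle_or_lt (- u + PI / 2) x) as [Hx'|Hx'].
    + rewrite clamp_above by lra. replace (- u + PI / 2 + u) with (PI / 2) by ring.
      rewrite cos_PI2.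
      destruct (H2_outside (x + u)) as [-> ->]; [rewrite Rabs_right; lra | ring].
    + rewrite clamp_id by lra.
      destruct (H2_inside (x + u)) as [-> ->]; [apply Rabs_le; lra|].
      destruct (H2_inside (x + v)) as [-> ->]; [apply Rabs_le; lra|].
      rewrite (cos_plus (x + u) (x + v)), !sin_2a. ring.
Qed.

Lemma pair_primitive_deriv u v x :
  derivable_pt_lim (pair_primitive u v) x (pair_density u v x).
Proof.
  assert (Hsorted : forall u v, v <= u -> derivable_pt_lim (pair_primitive u v) x (pair_density u v x)).
  { clear u v. intros u v Hvu. unfold pair_primitive. destruct Rle_dec as [Hd|Hd].
    - rewrite Rabs_right in Hd by lra.
      rewrite pair_window_le, pair_density_kernel by lra.
      apply derivable_pt_lim_comp_clamp; [lra | apply pair_core_deriv | ..];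
        unfold pair_kernel.
      + replace (- v - PI / 2 + v) with (- (PI / 2)) by ring. rewrite cos_neg, cos_PI2. ring.
      + replace (- u + PI / 2 + u) with (PI / 2) by ring. rewrite cos_PI2. ring.
    - destruct (H2_disjoint (x + u) (x + v)) as [E E'].
      { replace (x + u - (x + v)) with (u - v) by ring. lra. }
      unfold pair_density. replace (4 * H2 (x + u) * H2 (x + v)) with (4 * (H2 (x + u) * H2 (x + v)))
        by ring. rewrite E, E', Rmult_0_r, Rminus_0_r. apply derivable_pt_lim_const. }
  destruct (Rle_or_lt v u) as [Hvu|Huv]; [exact (Hsorted u v Hvu)|].
  rewrite pair_primitive_sym, pair_density_sym. apply Hsorted. lra.
Qed.

Definition overlap (d : R) : R := if Rle_dec d PI then PI - d + sin (2 * d) / 2 else 0.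

Lemma pair_primitive_increment u v M : Rabs u + PI <= M -> Rabs v + PI <= M ->
  pair_primitive u v M - pair_primitive u v (- M) = overlap (Rabs (u - v)).
Proof.
  assert (Hsorted : forall u v, v <= u -> Rabs u + PI <= M -> Rabs v + PI <= M ->
            pair_primitive u v M - pair_primitive u v (- M) = overlap (Rabs (u - v))).
  { clear u v. intros u v Hvu HuM HvM. assert (Hp := PI2_pos).
    assert (Hu := Rle_abs (- u)). rewrite Rabs_Ropp in Hu. assert (Hv := Rle_abs v).
    rewrite Rabs_right by lra. unfold pair_primitive, overlap.
    rewrite Rabs_right by lra. destruct Rle_dec as [Hd|Hd]; [|ring].
    rewrite pair_window_le, clamp_above, clamp_below by lra. unfold pair_core.
    set (d := u - v).
    replace (2 * (- u + PI / 2 + u)) with PI by field.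
    replace (2 * (- u + PI / 2 + v)) with (PI - 2 * d) by (unfold d; field).
    replace (PI + (PI - 2 * d)) with (2 * PI + - (2 * d)) by ring.
    replace (2 * (- v - PI / 2 + u)) with (2 * d + - PI) by (unfold d; field).
    replace (2 * (- v - PI / 2 + v)) with (- PI) by field.
    replace (2 * d + - PI + - PI) with (2 * d + - (2 * PI)) by ring.
    rewrite sin_PI_x, !sin_plus, !sin_neg, !cos_neg, sin_2PI, cos_2PI, sin_PI, cos_PI.
    unfold d. field. }
  intros HuM HvM. destruct (Rle_or_lt v u) as [Hvu|Huv]; [exact (Hsorted u v Hvu HuM HvM)|].
  rewrite pair_primitive_sym, Rabs_minus_sym. apply Hsorted; lra.
Qed.

Lemma sin_le_id x : 0 <= x -> sin x <= x.
Proof.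
  intros Hx. destruct (Rle_lt_or_eq _ _ Hx) as [Hlt|<-].
  - left. apply sin_lt_x, Hlt.
  - rewrite sin_0. lra.
Qed.

Lemma overlap_0 : overlap 0 = PI.
Proof.
  unfold overlap. destruct Rle_dec as [_|H]; [|assert (Hp := PI_RGT_0); lra].
  rewrite Rmult_0_r, sin_0. field.
Qed.

Lemma overlap_bounds d : 0 <= d -> 0 <= overlap d <= PI.
Proof.
  intros Hd. assert (Hp := PI_RGT_0). unfold overlap. destruct Rle_dec as [HdP|]; [|lra].
  assert (Hs := sin_le_id (2 * d) ltac:(lra)).
  assert (Hs' := sin_le_id (2 * (PI - d)) ltac:(lra)).
  replace (2 * (PI - d)) with (2 * PI + - (2 * d)) in Hs' by ring.
  rewrite sin_plus, sin_2PI, cos_2PI, sin_neg in Hs'. lra.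
Qed.

(* With [s = d + e - PI], [sin (2 d) + sin (2 e) = - 2 sin s cos (d - e)],
   so the sum is at most [PI - s + sin s <= PI]. *)
Lemma overlap_add_le d e : 0 <= d -> 0 <= e -> PI <= d + e -> overlap d + overlap e <= PI.
Proof.
  intros Hd He Hde. assert (Bd := overlap_bounds d Hd). assert (Be := overlap_bounds e He).
  unfold overlap in *. destruct (Rle_dec d PI); destruct (Rle_dec e PI); try lra.
  set (s := d + e - PI).
  replace (2 * d) with ((s + PI) + (d - e)) by (unfold s; ring).
  replace (2 * e) with ((s + PI) + - (d - e)) by (unfold s; ring).
  rewrite !sin_plus, sin_neg, cos_neg, sin_PI, cos_PI.
  assert (Hs0 : 0 <= sin s) by (apply sin_ge_0; unfold s; lra).
  assert (Hs := sin_le_id s ltac:(unfold s; lra)).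
  assert (Hc := COS_bound (d - e)).
  assert (sin s * cos (d - e) >= - sin s) by nra.
  unfold s in *. lra.
Qed.

(* [2 c_k c_(k+1) W_k >= - W_k (c_k^2 + c_(k+1)^2)] leaves each [c_k^2] with the
   weight [p - W_(k-1) - W_k >= 0]; the induction carries the last such weight. *)
Lemma band_form_nonneg (p : R) (c W : nat -> R) m :
  (forall k, 0 <= W k <= p) -> (forall k, W k + W (S k) <= p) ->
  0 <= p * sum_lt (fun k => c k ^ 2) (S m) + 2 * sum_lt (fun k => c k * c (S k) * W k) m.
Proof.
  intros HW HWW.
  set (w := fun k => match k with O => 0 | S j => W j end).
  assert (Hinv : forall m, (p - w m) * c m ^ 2
            <= p * sum_lt (fun k => c k ^ 2) (S m) + 2 * sum_lt (fun k => c k * c (S k) * W k) m).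
  { intro n. induction n as [|n IH]; simpl sum_lt; simpl w; [lra|].
    assert (Hw : w n + W n <= p) by (destruct n; unfold w; [specialize (HW O); lra | apply HWW]).
    assert (Hcross : - (W n * (c n ^ 2 + c (S n) ^ 2)) <= 2 * (c n * c (S n) * W n)).
    { assert (0 <= W n * (c n + c (S n)) ^ 2) by (apply Rmult_le_pos; [apply HW | apply pow2_ge_0]).
      assert (W n * (c n + c (S n)) ^ 2
              = W n * (c n ^ 2 + c (S n) ^ 2) + 2 * (c n * c (S n) * W n)) by ring.
      lra. }
    assert (0 <= (p - w n - W n) * c n ^ 2) by (apply Rmult_le_pos; [lra | apply pow2_ge_0]).
    simpl sum_lt in IH. nra. }
  eapply Rle_trans; [|apply Hinv].
  apply Rmult_le_pos; [|apply pow2_ge_0]. unfold w. destruct m as [|j]; cbn; [specialize (HW O) | specialize (HW j)]; lra.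
Qed.

Section Superposition.

Variables (b l : nat -> R) (m : nat).
Hypothesis l_incr : forall k, l k < l (S k).
Hypothesis l_gap : forall k, PI <= l (S (S k)) - l k.

Definition Gsum (x : R) : R := sum_lt (fun k => b k * H2 (x + l k)) (S m).
Definition Gsum' (x : R) : R := sum_lt (fun k => b k * H2' (x + l k)) (S m).

Lemma Gsum_deriv x : derivable_pt_lim Gsum x (Gsum' x).
Proof.
  apply (sum_lt_deriv (fun k y => b k * H2 (y + l k))). intro k.
  exact (derivable_pt_lim_scal _ (b k) x _ (derivable_pt_lim_shift H2 (l k) x _ (H2_deriv _))).
Qed.

Lemma Gsum'_continuity x : continuity_pt Gsum' x.
Proof.
  apply (sum_lt_continuity (fun k y => b k * H2' (y + l k))). intro k.
  exact (continuity_pt_scal _ (b k) x (continuity_pt_shift H2' (l k) x (H2'_continuity _))).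
Qed.

Lemma l_mono i j : (i <= j)%nat -> l i <= l j.
Proof.
  induction 1 as [|j _ IH]; [lra|]. specialize (l_incr j). lra.
Qed.

Lemma l_separated i j : (i + 2 <= j)%nat -> PI <= Rabs (l i - l j).
Proof.
  intros Hij. rewrite Rabs_minus_sym, Rabs_right.
  - specialize (l_gap i). assert (l (S (S i)) <= l j) by (apply l_mono; lia). lra.
  - assert (l i <= l j) by (apply l_mono; lia). lra.
Qed.

Definition support_radius : R := Rabs (l O) + Rabs (l m) + PI.

Lemma l_within_support k : (k <= m)%nat -> Rabs (l k) + PI <= support_radius.
Proof.
  intros Hk. unfold support_radius.
  assert (Hlo : l O <= l k) by (apply l_mono; lia). assert (Hhi : l k <= l m) by (apply l_mono; lia).
  assert (H0 := Rle_abs (- l O)). rewrite Rabs_Ropp in H0. assert (Hm := Rle_abs (l m)).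
  assert (Rabs (l k) <= Rabs (l O) + Rabs (l m)); [|lra].
  apply Rabs_le. assert (Hm0 := Rabs_pos (l m)). assert (H00 := Rabs_pos (l O)). lra.
Qed.

Lemma Gsum_outside x : support_radius <= Rabs x -> Gsum x = 0 /\ Gsum' x = 0.
Proof.
  intros Hx.
  assert (Hk : forall k, (k < S m)%nat -> H2 (x + l k) = 0 /\ H2' (x + l k) = 0).
  { intros k Hk. apply H2_outside.
    assert (Hl := l_within_support k ltac:(lia)). assert (Hp := PI2_pos).
    assert (Rabs x <= Rabs (x + l k) + Rabs (- l k)); [|rewrite Rabs_Ropp in *; lra].
    replace x with ((x + l k) + - l k) at 1 by ring. apply Rabs_triang. }
  unfold Gsum, Gsum'. split; apply sum_lt_0; intros k Hk';
    [rewrite (proj1 (Hk k Hk')) | rewrite (proj2 (Hk k Hk'))]; ring.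
Qed.

Definition energy_gap (x : R) : R :=
  sum_lt (fun k => b k ^ 2 * pair_density (l k) (l k) x) (S m)
  + 2 * sum_lt (fun k => b k * b (S k) * pair_density (l k) (l (S k)) x) m.

Definition energy_primitive (x : R) : R :=
  sum_lt (fun k => b k ^ 2 * pair_primitive (l k) (l k) x) (S m)
  + 2 * sum_lt (fun k => b k * b (S k) * pair_primitive (l k) (l (S k)) x) m.

(* Translates of [H2] by [l i] and [l j] have disjoint supports once [i + 2 <= j],
   so only neighbouring terms interact in [4 G^2 - G'^2]. *)
Lemma energy_gap_eq x : 4 * Gsum x ^ 2 - Gsum' x ^ 2 = energy_gap x.
Proof.
  set (g := fun k => b k * H2 (x + l k)). set (g' := fun k => b k * H2' (x + l k)).
  assert (Hdisj : forall i j, (i + 2 <= j)%nat ->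
            g i * g j = 0 /\ g' i * g' j = 0).
  { intros i j Hij. destruct (H2_disjoint (x + l i) (x + l j)) as [E E'].
    { replace (x + l i - (x + l j)) with (l i - l j) by ring. apply l_separated, Hij. }
    unfold g, g'. split.
    - transitivity (b i * b j * (H2 (x + l i) * H2 (x + l j))); [ring | rewrite E; ring].
    - transitivity (b i * b j * (H2' (x + l i) * H2' (x + l j))); [ring | rewrite E'; ring]. }
  change (Gsum x) with (sum_lt g (S m)). change (Gsum' x) with (sum_lt g' (S m)).
  rewrite !sum_lt_sqr_band by (intros i j Hij; apply (Hdisj i j Hij)).
  unfold energy_gap.
  rewrite (sum_lt_ext (fun k => b k ^ 2 * pair_density (l k) (l k) x)
                      (fun k => 4 * g k ^ 2 - g' k ^ 2)),
    (sum_lt_ext (fun k => b k * b (S k) * pair_density (l k) (l (S k)) x)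
                (fun k => 4 * (g k * g (S k)) - g' k * g' (S k)))
    by (intros k _; unfold g, g', pair_density; ring).
  rewrite <- !sum_lt_sub, <- !sum_lt_scal. ring.
Qed.

Lemma energy_primitive_deriv x : derivable_pt_lim energy_primitive x (energy_gap x).
Proof.
  unfold energy_primitive, energy_gap.
  apply (derivable_pt_lim_plus
    (fun y => sum_lt (fun k => b k ^ 2 * pair_primitive (l k) (l k) y) (S m))
    (fun y => 2 * sum_lt (fun k => b k * b (S k) * pair_primitive (l k) (l (S k)) y) m)).
  - apply (sum_lt_deriv (fun k y => b k ^ 2 * pair_primitive (l k) (l k) y)). intro k.
    exact (derivable_pt_lim_scal _ _ x _ (pair_primitive_deriv _ _ _)).
  - apply (derivable_pt_lim_scal
      (fun y => sum_lt (fun k => b k * b (S k) * pair_primitive (l k) (l (S k)) y) m)).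
    apply (sum_lt_deriv (fun k y => b k * b (S k) * pair_primitive (l k) (l (S k)) y)). intro k.
    exact (derivable_pt_lim_scal _ _ x _ (pair_primitive_deriv _ _ _)).
Qed.

Lemma energy_primitive_increment :
  energy_primitive support_radius - energy_primitive (- support_radius)
  = PI * sum_lt (fun k => b k ^ 2) (S m)
    + 2 * sum_lt (fun k => b k * b (S k) * overlap (Rabs (l k - l (S k)))) m.
Proof.
  unfold energy_primitive.
  match goal with |- ?A + 2 * ?B - (?C + 2 * ?D) = _ =>
    replace (A + 2 * B - (C + 2 * D)) with ((A - C) + 2 * (B - D)) by ring end.
  rewrite !sum_lt_sub, (sum_lt_scal PI). f_equal; [|f_equal]; apply sum_lt_ext; intros k Hk.
  - rewrite <- Rmult_minus_distr_l, pair_primitive_increment by (apply l_within_support; lia).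
    rewrite Rminus_diag, Rabs_R0, overlap_0. ring.
  - rewrite <- Rmult_minus_distr_l, pair_primitive_increment by (apply l_within_support; lia).
    reflexivity.
Qed.

Lemma Gsum_energy_ineq : exists (G' : R -> R) (I1 I2 : R),
    (forall x, derivable_pt_lim Gsum x (G' x)) /\
    improper_integral (fun x => Rabs (G' x) ^ 2) I1 /\
    improper_integral (fun x => Rabs (Gsum x) ^ 2) I2 /\
    I1 <= 4 * I2.
Proof.
  set (M := support_radius).
  assert (C1 : forall x, continuity_pt (fun y => Rabs (Gsum' y) ^ 2) x)
    by (intro x; apply continuity_pt_abs_sqr, Gsum'_continuity).
  assert (C2 : forall x, continuity_pt (fun y => Rabs (Gsum y) ^ 2) x)
    by (intro x; apply continuity_pt_abs_sqr, derivable_continuous_pt; eexists; apply Gsum_deriv).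
  assert (Z : forall x, M <= Rabs x -> Gsum x = 0 /\ Gsum' x = 0) by apply Gsum_outside.
  set (pr1 := Riemann_integrable_continuous _ (- M) M C1).
  set (pr2 := Riemann_integrable_continuous _ (- M) M C2).
  exists Gsum', (RiemannInt pr1), (RiemannInt pr2).
  split; [exact Gsum_deriv|]. split; [|split].
  - apply improper_integral_compact; [exact C1|].
    intros x Hx. rewrite (proj2 (Z x Hx)), Rabs_R0. ring.
  - apply improper_integral_compact; [exact C2|].
    intros x Hx. rewrite (proj1 (Z x Hx)), Rabs_R0. ring.
  - assert (Hgap := RiemannInt_primitive_gap _ _ energy_primitive 4 (- M) M pr1 pr2 C1 C2).
    assert (Hpos : 0 <= energy_primitive M - energy_primitive (- M)).
    { unfold M. rewrite energy_primitive_increment. apply band_form_nonneg.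
      - intro k. apply overlap_bounds, Rabs_pos.
      - intro k. assert (Hk := l_incr k). assert (HSk := l_incr (S k)). assert (Hgapk := l_gap k).
        rewrite !Rabs_left1 by lra. apply overlap_add_le; lra. }
    enough (RiemannInt pr1 + (energy_primitive M - energy_primitive (- M)) = 4 * RiemannInt pr2)
      by lra.
    apply Hgap. intro x. rewrite !pow2_abs, energy_gap_eq. apply energy_primitive_deriv.
Qed.

End Superposition.

Lemma Gfun_Gsum lam a N :
  Gfun lam a N = Gsum (fun k => a (Z.of_nat k - Z.of_nat N)%Z)
                      (fun k => lam (Z.of_nat k - Z.of_nat N)%Z) (2 * N).
Proof. apply functional_extensionality. intro x. apply sum_f_R0_sum_lt. Qed.

Theorem mainTheorem3 (lam : Z -> R) (a : Z -> R) (N : nat)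
  (hinc : forall n : Z, lam n < lam (n + 1)%Z)
  (hgap : forall n : Z, lam (n + 2)%Z - lam n >= PI)
  (hsupp : forall n : Z, (Z.of_nat N < Z.abs n)%Z -> a n = 0) :
  exists (G' : R -> R) (I1 I2 : R),
    (forall x : R, derivable_pt_lim (Gfun lam a N) x (G' x)) /\
    improper_integral (fun x => Rabs (G' x) ^ 2) I1 /\
    improper_integral (fun x => Rabs (Gfun lam a N x) ^ 2) I2 /\
    I1 <= 4 * I2.
Proof.
  rewrite Gfun_Gsum. apply Gsum_energy_ineq; intro k.
  - replace (Z.of_nat (S k) - Z.of_nat N)%Z with (Z.of_nat k - Z.of_nat N + 1)%Z by lia.
    apply hinc.
  - replace (Z.of_nat (S (S k)) - Z.of_nat N)%Z with (Z.of_nat k - Z.of_nat N + 2)%Z by lia.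
    specialize (hgap (Z.of_nat k - Z.of_nat N)%Z). lra.
Qed.
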